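(* Let $n$ be a positive integer and assume hypothesis $(\star)$ for $\mathbb{R}^n$: for every family $\mathcal{F}$ of closed Lebesgue-null subsets of $\mathbb{R}^n$ with $|\mathcal{F}|<\mathfrak{c}$ and every Lebesgue-null set $N\subset\mathbb{R}^n$, one has $N\cup\bigcup\mathcal{F}\neq\mathbb{R}^n$ (e.g. under the Continuum Hypothesis). Then there exists a set $A\subset\mathbb{R}^n$ that is not Lebesgue null (hence $\dim_H A=n$) such that no subset of $A$ can be mapped onto a non-degenerate closed interval by a uniformly continuous map.
   Context: $\mathfrak{c}$ denotes the cardinality of the continuum; $\dim_H$ denotes Hausdorff dimension. *)

From mathcomp Require Import all_boot.
From Stdlib Require Import Reals.
Set Implicit Arguments.
Unset Strict Implicit.
Unset Printing Implicit Defensive.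

Definition Rn (n : nat) : Type := 'I_n -> R.

Definition edist (n : nat) (x y : Rn n) : R :=
  sqrt (\big[Rplus/0%R]_(i < n) ((x i - y i) * (x i - y i))%R).

Definition is_open (n : nat) (U : Rn n -> Prop) : Prop :=
  forall x, U x -> exists d : R, (0 < d)%R /\ forall y, (edist x y < d)%R -> U y.
Definition is_closed (n : nat) (C : Rn n -> Prop) : Prop :=
  is_open (fun x => ~ C x).

Definition box_vol (n : nat) (a b : Rn n) : R :=
  \big[Rmult/1%R]_(i < n) (b i - a i)%R.

Definition lebesgue_null (n : nat) (N : Rn n -> Prop) : Prop :=
  forall eps : R, (0 < eps)%R ->
    exists a b : nat -> Rn n,
      (forall k i, (a k i <= b k i)%R) /\
      (forall x, N x -> exists k, forall i, (a k i <= x i <= b k i)%R) /\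
      (forall m, (sum_f_R0 (fun k => box_vol (a k) (b k)) m <= eps)%R).

(* |F| < c : F injects into R but R does not inject into F. *)
Definition card_lt_continuum (T : Type) (F : T -> Prop) : Prop :=
  (exists g : {X : T | F X} -> R, forall u v, g u = g v -> u = v) /\
  ~ (exists h : R -> {X : T | F X}, forall s t, h s = h t -> s = t).

Definition hyp_star (n : nat) : Prop :=
  forall (F : (Rn n -> Prop) -> Prop),
    (forall X, F X -> is_closed X /\ lebesgue_null X) ->
    card_lt_continuum F ->
    forall N : Rn n -> Prop, lebesgue_null N ->
      exists x : Rn n, ~ N x /\ ~ (exists X, F X /\ X x).

Definition unif_cont_on (n : nat) (S : Rn n -> Prop) (f : Rn n -> R) : Prop :=
  forall eps : R, (0 < eps)%R -> exists d : R, (0 < d)%R /\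
    forall x y, S x -> S y -> (edist x y < d)%R -> (Rabs (f x - f y) < eps)%R.

Definition maps_onto_interval (n : nat) (S : Rn n -> Prop) (f : Rn n -> R) (c d : R) : Prop :=
  (forall x, S x -> (c <= f x <= d)%R) /\
  (forall y, (c <= y <= d)%R -> exists x, S x /\ f x = y).

(* A is a Luzin-type set, built by transfinite recursion along a well-ordering
   of length c.  Closed null sets of the form "countable intersection of finite
   unions of boxes" and null sets of the form "countable intersection of
   countable unions of boxes" are coded by bit sequences, and the codes are
   indexed by an initial well-ordering of R of length c.  At stage a we use
   (star) to pick x_a in the unit cube outside the a-th coded null set and all
   earlier coded closed null sets.  Then A = {x_a} is not null (every null set
   lies in a coded one), and A meets every coded closed null set in fewer than
   c points.  Conversely, if f is uniformly continuous on S, a subset of the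
   unit cube, and maps S onto [c, d], a Cantor scheme inside [c, d] produces a
   coded closed null set containing an injective copy of R inside S. *)
From HB Require Import structures.
From Stdlib Require Import Reals Lra Lia ZArith Cantor.
From mathcomp Require Import all_boot boolp wochoice zify.
From Stdlib Require Import Classical ClassicalEpsilon ProofIrrelevance FunctionalExtensionality.
Set Implicit Arguments.
Unset Strict Implicit.
Unset Printing Implicit Defensive.

(* Equality on R is decidable (classically); this is needed to well-order R. *)
HB.instance Definition _ := hasDecEq.Build R (compareP Req_dec_T).

Local Open Scope R_scope.

Definition small (X : R -> Prop) : Prop :=
  ~ exists h : R -> R, injective h /\ forall r, X (h r).

Lemma small_sub (X Y : R -> Prop) : (forall r, X r -> Y r) -> small Y -> small X.
Proof. by move=> XY smallY [h [h_inj hX]]; apply: smallY; exists h; split=> // r; apply: XY. Qed.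

(* Adding one point keeps a set small: an injection of R into X + {p}
   hitting p can be shifted to avoid it. *)
Lemma small_add1 (X : R -> Prop) p : small X -> small (fun r => X r \/ r = p).
Proof.
move=> smallX [h [h_inj hX]]; apply: smallX.
case: (classic (exists r0, h r0 = p)) => [[r0 hr0]|hp].
- exists (fun r => h (r0 + exp r)); split.
  + by move=> r s /h_inj E; apply: exp_inv; lra.
  + move=> r; case: (hX (r0 + exp r)) => // E; exfalso.
    move: E; rewrite -hr0 => /h_inj; have := exp_pos r; lra.
- exists h; split=> // r; case: (hX r) => // E.
  by exfalso; apply: hp; exists r.
Qed.

Section WellOrder.
Variables (T : eqType) (W : rel T).
Hypothesis W_wo : well_order W.

Lemma wo_min (P : T -> Prop) : (exists x, P x) -> exists z, P z /\ forall x, P x -> W z x.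
Proof.
move=> [x Px]; have ne : nonempty [pred y | `[< P y >]] by exists x; apply/asboolP.
have [z [[/asboolP Pz lbz] _]] := W_wo ne.
by exists z; split=> // y Py; apply: lbz; apply/asboolP.
Qed.

Let W_chain : wo_chain W (mem predT) := withinW W_wo.

Lemma wo_total x y : W x y \/ W y x.
Proof. by have /orP := wo_chainW W_chain (x:=x) (y:=y) isT isT. Qed.

Lemma wo_anti x y : W x y -> W y x -> x = y.
Proof. by move=> Wxy Wyx; apply: (wo_chain_antisymmetric W_chain) => //; rewrite Wxy Wyx. Qed.
End WellOrder.

(* It is obtained from the least
   point of a well-ordering of R with a non-small initial segment. *)
Lemma continuum_ordering : exists (I : R -> Prop) (lt : R -> R -> Prop),
  ~ small I /\ (forall a, I a -> small (fun b => lt b a)) /\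
  (forall b, I b -> small (fun a => ~ lt b a)).
Proof.
have [W W_wo] := well_ordering_principle R.
pose lt b a := W b a /\ b <> a.
have final_small b : small (lt ^~ b) -> small (fun a => ~ lt b a).
  move=> smallb; apply: (small_sub (Y := fun r => lt r b \/ r = b)); last exact: small_add1.
  move=> a nba.
  case: (Req_dec_T a b) => [->|ab]; [by right | left; split=> //].
  by case: (wo_total W_wo a b) => // Wba; exfalso; apply: nba; split; auto.
case: (classic (exists a, ~ small (lt ^~ a))) => [big|]; last first.
  move=> allsmall; exists (fun _ => True), lt; split.
    by move=> smallT; apply: smallT; exists id; split.
  by split=> a _; [|apply: final_small]; apply: NNPP => ?; apply: allsmall; exists a.
have [a0 [big_a0 a0_min]] := wo_min W_wo big.
have small_below a : lt a a0 -> small (lt ^~ a).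
  move=> [Wa a_ne]; apply: NNPP => big_a; apply: a_ne.
  exact: (wo_anti W_wo Wa (a0_min a big_a)).
exists (lt ^~ a0), lt; split=> //; split=> [a|b] /small_below //.
exact: final_small.
Qed.

Definition rat_enum (k : nat) : R :=
  match @unpickle (nat * nat * nat)%type k with
  | Some (a, b, m) => (INR a - INR b) / INR m.+1
  | None => 0
  end.

Lemma IZR_nat_diff (z : Z) : exists a b : nat, IZR z = INR a - INR b.
Proof.
case: (Z_le_gt_dec 0 z) => z_sign.
- exists (Z.to_nat z), 0%nat; rewrite (INR_IZR_INZ (Z.to_nat z)) Z2Nat.id /=; [lra|lia].
- exists 0%nat, (Z.to_nat (- z)); rewrite (INR_IZR_INZ (Z.to_nat (- z))) Z2Nat.id; last lia.
  rewrite opp_IZR /=; lra.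
Qed.

Lemma rat_enum_dense x y : x < y -> exists k, x < rat_enum k < y.
Proof.
move=> xy; pose m := Z.to_nat (up (/ (y - x))).
have [up_gt _] := archimed (/ (y - x)).
have inv_pos : 0 < / (y - x) by apply: Rinv_0_lt_compat; lra.
have m_large : / (y - x) < INR m.+1.
  rewrite S_INR /m; case: (Z_le_gt_dec 0 (up (/ (y - x)))) => up_sign.
  + rewrite INR_IZR_INZ Z2Nat.id //; lra.
  + have : IZR (up (/ (y - x))) <= 0 by apply: IZR_le; lia.
    have := pos_INR (Z.to_nat (up (/ (y - x)))); lra.
have m_pos : 0 < INR m.+1 by apply: lt_0_INR; lia.
have gap : 1 < (y - x) * INR m.+1.
  have := Rmult_lt_compat_l (y - x) _ _ ltac:(lra) m_large.
  by rewrite Rinv_r; lra.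
have [up1 up2] := archimed (x * INR m.+1).
have [a [b ab]] := IZR_nat_diff (up (x * INR m.+1)).
exists (pickle (a, b, m)); rewrite /rat_enum pickleK -ab.
split; apply: (Rmult_lt_reg_r (INR m.+1)) => //;
  rewrite /Rdiv Rmult_assoc Rinv_l; lra.
Qed.

(* The Dedekind cut of x: bit k records whether the k-th rational lies below x.
   By density this is an injection of R into Cantor space. *)
Definition cut_code (x : R) : nat -> bool :=
  fun k => if Rlt_dec (rat_enum k) x then true else false.

Lemma cut_code_inj : injective cut_code.
Proof.
have sep x y : x < y -> cut_code x <> cut_code y.
  move=> xy E; have [k [xk ky]] := rat_enum_dense xy.
  move: (f_equal (fun g => g k) E); rewrite /cut_code.
  by case: Rlt_dec => ?; case: Rlt_dec => ? //; lra.
move=> x y E; case: (Rtotal_order x y) => [xy|[//|yx]]; exfalso.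
- exact: sep xy E.
- exact: sep yx (esym E).
Qed.

Fixpoint ternary_partial (b : nat -> bool) (m : nat) : R :=
  match m with
  | O => 0
  | S m' => ternary_partial b m' + (if b m' then / 3 ^ m else 0)
  end.

Lemma pow3_pos k : 0 < 3 ^ k.
Proof. by apply: pow_lt; lra. Qed.

Lemma ternary_tail b j t :
  ternary_partial b j <= ternary_partial b (j + t) <=
  ternary_partial b j + (/ 3 ^ j - / 3 ^ (j + t)) / 2.
Proof.
elim: t => [|t IH]; first by rewrite addn0; lra.
rewrite addnS /= Rinv_mult; have := Rinv_0_lt_compat _ (pow3_pos (j + t)%nat).
case: (b (j + t)%nat); lra.
Qed.

Lemma ternary_bounded b : bound (fun r => exists m, r = ternary_partial b m).
Proof.
exists (/ 2) => r [m ->]; have := ternary_tail b 0 m.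
rewrite add0n /=; have := Rinv_0_lt_compat _ (pow3_pos m); lra.
Qed.

Definition ternary (b : nat -> bool) : R :=
  proj1_sig (completeness _ (ternary_bounded b) (ex_intro _ 0 (ex_intro _ 0%nat erefl))).

Lemma ternary_lub b : is_lub (fun r => exists m, r = ternary_partial b m) (ternary b).
Proof. by rewrite /ternary; case: completeness. Qed.

Lemma ternary_partial_prefix b b' k :
  (forall j, (j < k)%nat -> b j = b' j) -> ternary_partial b k = ternary_partial b' k.
Proof.
elim: k => [|k IH] same //=.
by rewrite IH => [|j /ltnW]; [rewrite same | apply: same].
Qed.

Lemma ternary_lt b b' k : (forall j, (j < k)%nat -> b j = b' j) ->
  b k = false -> b' k = true -> ternary b < ternary b'.
Proof.
move=> prefix bk b'k.
have h3 := Rinv_0_lt_compat _ (pow3_pos k.+1).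
have ub : is_upper_bound (fun r => exists m, r = ternary_partial b m)
                         (ternary_partial b k + / 3 ^ k.+1 / 2).
  move=> r [m ->]; case: (leqP m k) => km.
  - by have := ternary_tail b m (k - m); rewrite subnKC //; lra.
  - have := ternary_tail b k.+1 (m - k.+1); rewrite subnKC //= bk.
    have := Rinv_0_lt_compat _ (pow3_pos m); lra.
have [_ lub_b] := ternary_lub b; have [ub_b' _] := ternary_lub b'.
have := lub_b _ ub; have := ub_b' _ (ex_intro _ k.+1 erefl).
have unfold3 : / 3 ^ k.+1 = / (3 * 3 ^ k) by [].
rewrite /= b'k (ternary_partial_prefix prefix); lra.
Qed.

Lemma first_difference (b b' : nat -> bool) : b <> b' ->
  exists k, (forall j, (j < k)%nat -> b j = b' j) /\ b k <> b' k.
Proof.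
move=> neq; have diff : exists k, b k != b' k.
  apply: NNPP => same; apply: neq; apply: functional_extensionality => k.
  by apply/eqP; apply: negbNE; apply/negP => ?; apply: same; exists k.
case: (ex_minnP diff) => k /eqP bk kmin; exists k; split=> // j jk.
by apply/eqP; apply: negbNE; apply/negP => /kmin; rewrite leqNgt jk.
Qed.

Lemma ternary_inj : injective ternary.
Proof.
move=> b b' E; apply: NNPP => /first_difference [k [prefix bk]].
move: bk; case E1: (b k); case E2: (b' k) => // _.
- by have := ternary_lt (fun j jk => esym (prefix j jk)) E2 E1; lra.
- by have := ternary_lt prefix E1 E2; lra.
Qed.

Definition real_of_cut (b : nat -> bool) : R :=
  match excluded_middle_informative (exists r, cut_code r = b) with
  | left H => proj1_sig (constructive_indefinite_description _ H)
  | right _ => 0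
  end.

Lemma real_of_cutK : cancel cut_code real_of_cut.
Proof.
move=> r; rewrite /real_of_cut; case: excluded_middle_informative => [H|[]]; last by exists r.
by case: constructive_indefinite_description => /= s /cut_code_inj.
Qed.

Definition decode_reals (c : nat -> bool) : nat -> R :=
  fun j => real_of_cut (fun t => c (pickle (j, t))).

Lemma decode_reals_surj (d : nat -> R) : exists c, decode_reals c = d.
Proof.
exists (fun p => if @unpickle (nat * nat)%type p is Some (j, t) then cut_code (d j) t else false).
apply: functional_extensionality => j; rewrite /decode_reals.
under [fun t => _]functional_extensionality => t do rewrite pickleK.
by rewrite real_of_cutK.
Qed.

Definition decode_nat (x : R) : nat :=
  match excluded_middle_informative (exists k, INR k = x) with
  | left H => proj1_sig (constructive_indefinite_description _ H)
  | right _ => 0%nat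
  end.

Lemma decode_natK : cancel INR decode_nat.
Proof.
move=> k; rewrite /decode_nat; case: excluded_middle_informative => [H|[]]; last by exists k.
by case: constructive_indefinite_description => /= s /INR_eq.
Qed.

Section CodedSets.
Variable n : nat.

Definition in_box (lo hi x : Rn n) : Prop := forall i, lo i <= x i <= hi i.

(* A sequence of reals d describes a doubly indexed family of boxes
   [box_lo d m k, box_hi d m k] together with counts box_count d m. *)
Definition box_lo (d : nat -> R) (m k : nat) : Rn n := fun i => d (pickle (0%nat, m, k, nat_of_ord i)).
Definition box_hi (d : nat -> R) (m k : nat) : Rn n := fun i => d (pickle (1%nat, m, k, nat_of_ord i)).
Definition box_count (d : nat -> R) (m : nat) : nat := decode_nat (d (pickle (2%nat, m, 0%nat, 0%nat))).

Lemma box_data_surj (lo hi : nat -> nat -> Rn n) (K : nat -> nat) : exists c,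
  (forall m k, box_lo (decode_reals c) m k = lo m k) /\
  (forall m k, box_hi (decode_reals c) m k = hi m k) /\
  (forall m, box_count (decode_reals c) m = K m).
Proof.
pose coord (x : Rn n) (i : nat) := if @insub _ (fun i => (i < n)%nat) 'I_n i is Some i' then x i' else 0.
pose d j := if @unpickle (nat * nat * nat * nat)%type j is Some (t, m, k, i) then
              if t == 0%nat then coord (lo m k) i
              else if t == 1%nat then coord (hi m k) i else INR (K m)
            else 0.
have [c cd] := decode_reals_surj d.
exists c; rewrite cd /box_lo /box_hi /box_count /d /coord; split; [|split] => *.
- by apply: functional_extensionality => i; rewrite pickleK /= valK.
- by apply: functional_extensionality => i; rewrite pickleK /= valK.
- by rewrite pickleK /= decode_natK.
Qed.

Definition closed_shape (d : nat -> R) : Rn n -> Prop :=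
  fun x => forall m, exists k, (k < box_count d m)%nat /\ in_box (box_lo d m k) (box_hi d m k) x.
Definition cover_shape (d : nat -> R) : Rn n -> Prop :=
  fun x => forall m, exists k, in_box (box_lo d m k) (box_hi d m k) x.

(* The coded closed null set and the coded null set of a bit sequence c: the
   corresponding shape if it is null, and the empty set otherwise. *)
Definition coded_closed_null (c : nat -> bool) : Rn n -> Prop :=
  fun x => lebesgue_null (closed_shape (decode_reals c)) /\ closed_shape (decode_reals c) x.
Definition coded_null (c : nat -> bool) : Rn n -> Prop :=
  fun x => lebesgue_null (cover_shape (decode_reals c)) /\ cover_shape (decode_reals c) x.
End CodedSets.

Lemma Rplus_associative : associative Rplus. Proof. by move=> *; ring. Qed.

Lemma Rmult_associative : associative Rmult. Proof. by move=> *; ring. Qed.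

HB.instance Definition _ := Monoid.isComLaw.Build R 0 Rplus Rplus_associative Rplus_comm Rplus_0_l.
HB.instance Definition _ := Monoid.isComLaw.Build R 1 Rmult Rmult_associative Rmult_comm Rmult_1_l.

Lemma rsum_le (I : Type) (s : seq I) (P : pred I) (F G : I -> R) :
  (forall i, P i -> F i <= G i) ->
  \big[Rplus/0]_(i <- s | P i) F i <= \big[Rplus/0]_(i <- s | P i) G i.
Proof. by move=> FG; apply: big_ind2 => //; [lra | move=> *; lra]. Qed.

Lemma rsum_le_In (I : Type) (l : seq I) (F G : I -> R) :
  (forall i, List.In i l -> F i <= G i) ->
  \big[Rplus/0]_(i <- l) F i <= \big[Rplus/0]_(i <- l) G i.
Proof.
elim: l => [|i l IH] FG; rewrite ?big_nil ?big_cons; first lra.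
by have := FG i (or_introl erefl); have := IH (fun j lj => FG j (or_intror lj)); lra.
Qed.

Lemma rsum_ge0 (I : Type) (s : seq I) (P : pred I) (F : I -> R) :
  (forall i, P i -> 0 <= F i) -> 0 <= \big[Rplus/0]_(i <- s | P i) F i.
Proof. by move=> F0; apply: big_ind => //; [lra | move=> *; lra]. Qed.

Lemma iter_Rplus k c : iter k (Rplus c) 0 = INR k * c.
Proof. by elim: k => [|k IH]; rewrite ?iterS ?IH ?S_INR /=; lra. Qed.

Lemma rsum_const (I : Type) (s : seq I) c : \big[Rplus/0]_(i <- s) c = INR (size s) * c.
Proof. by rewrite big_const_seq iter_Rplus count_predT. Qed.

Lemma rsum_term_le (I : finType) (F : I -> R) i :
  (forall j, 0 <= F j) -> F i <= \big[Rplus/0]_j F j.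
Proof.
move=> F0; rewrite (bigD1 i) //=.
have : 0 <= \big[Rplus/0]_(j | j != i) F j by apply: rsum_ge0.
lra.
Qed.

Section Euclid.
Variable n : nat.
Implicit Types x y : Rn n.

Lemma coord_le_edist x y i : Rabs (x i - y i) <= edist x y.
Proof.
rewrite /edist -(sqrt_Rsqr (Rabs (x i - y i))); last exact: Rabs_pos.
apply: sqrt_le_1_alt; rewrite -Rsqr_abs.
by apply: (rsum_term_le (F := fun j => (x j - y j) * (x j - y j))) => j; apply: Rle_0_sqr.
Qed.

Lemma edist_le_coord x y c : 0 <= c -> (forall i, Rabs (x i - y i) <= c) ->
  edist x y <= INR n * c.
Proof.
move=> c0 close; rewrite /edist -(sqrt_square (INR n * c)); last first.
  by apply: Rmult_le_pos => //; apply: pos_INR.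
apply: sqrt_le_1_alt; apply: (Rle_trans _ (\big[Rplus/0]_(i < n) (c * c))).
  by apply: rsum_le => i _; have := close i; have := Rle_abs (x i - y i); have := Rle_abs (- (x i - y i)); rewrite Rabs_Ropp; nra.
rewrite big_const_ord iter_Rplus.
have n_sq : INR n <= INR n * INR n.
  case: n => [|k]; first by rewrite /=; lra.
  by rewrite S_INR; have := pos_INR k; nra.
have := Rle_0_sqr c; rewrite /Rsqr; nra.
Qed.

Lemma closed_preimage (phi : Rn n -> Rn n) (X : Rn n -> Prop) :
  (forall x y, edist (phi x) (phi y) <= edist x y) -> is_closed X ->
  is_closed (fun x => X (phi x)).
Proof.
move=> lip closedX x /closedX [d [d0 ball]]; exists d; split=> // y xy.
by apply: ball; have := lip x y; lra.
Qed.

Lemma box_complement_open lo hi x : ~ in_box lo hi x ->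
  exists d, 0 < d /\ forall y, edist x y < d -> ~ in_box lo hi y.
Proof.
move=> /not_all_ex_not [i out_i].
case: (Rle_dec (lo i) (x i)) => lo_x.
- have hi_x : hi i < x i by apply: Rnot_le_lt => ?; apply: out_i.
  exists (x i - hi i); split; first lra.
  move=> y xy /(_ i); have := coord_le_edist x y i; have := Rle_abs (x i - y i); lra.
- exists (lo i - x i); split; first lra.
  move=> y xy /(_ i); have := coord_le_edist x y i.
  have := Rle_abs (- (x i - y i)); rewrite Rabs_Ropp; lra.
Qed.

Lemma finite_min (K : nat) (P : nat -> R -> Prop) :
  (forall k d d', P k d -> 0 < d' <= d -> P k d') ->
  (forall k, (k < K)%nat -> exists d, 0 < d /\ P k d) ->
  exists d, 0 < d /\ forall k, (k < K)%nat -> P k d.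
Proof.
move=> shrink; elim: K => [|K IH] ex; first by exists 1; split=> //; lra.
have [d1 [d1_pos P1]] := IH (fun k kK => ex k (ltnW kK)).
have [d2 [d2_pos P2]] := ex K (ltnSn K).
have dmin := Rmin_pos _ _ d1_pos d2_pos.
exists (Rmin d1 d2); split=> // k; rewrite ltnS leq_eqVlt => /orP [/eqP->|kK].
- by apply: shrink P2 _; split=> //; apply: Rmin_r.
- by apply: shrink (P1 k kK) _; split=> //; apply: Rmin_l.
Qed.

(* Coded shapes of the first kind are closed: at the level m witnessing that
   x is outside, x avoids finitely many closed boxes. *)
Lemma closed_shape_closed (d : nat -> R) : is_closed (closed_shape (n := n) d).
Proof.
move=> x /not_all_ex_not [m out_m].
pose P k del := forall y, edist x y < del -> ~ in_box (box_lo d m k) (box_hi d m k) y.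
have [del [del_pos ball]] : exists del, 0 < del /\ forall k, (k < box_count d m)%nat -> P k del.
  apply: finite_min => [k d1 d2 P1 [_ d21] y xy|k km]; first by apply: P1; lra.
  by apply: box_complement_open => inb; apply: out_m; exists k.
by exists del; split=> // y xy /(_ m) [k [km]]; apply: ball.
Qed.

Lemma coded_closed_null_closed (c : nat -> bool) : is_closed (coded_closed_null (n := n) c).
Proof.
move=> x not_x; case: (classic (lebesgue_null (closed_shape (n := n) (decode_reals c)))) => null.
- have [d [d0 ball]] := closed_shape_closed (fun shape_x => not_x (conj null shape_x)).
  by exists d; split=> // y /ball out_y [_ /out_y].
- by exists 1; split=> [|y _ [] //]; lra.
Qed.
End Euclid.

Lemma sum_f_R0_big f T : sum_f_R0 f T = \big[Rplus/0]_(t < T.+1) f t.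
Proof. by elim: T => [|T IH]; rewrite big_ord_recr /= ?big_ord0 -?IH //=; lra. Qed.

Lemma rsum_subset (T : finType) (A : {set T}) (F : T -> R) :
  (forall p, 0 <= F p) -> \big[Rplus/0]_(p in A) F p <= \big[Rplus/0]_p F p.
Proof.
move=> F0; rewrite [X in _ <= X](bigID (mem A)) /=.
have : 0 <= \big[Rplus/0]_(i | i \notin A) F i by apply: rsum_ge0.
lra.
Qed.

Lemma of_nat_le t : ((Cantor.of_nat t).1 <= t /\ (Cantor.of_nat t).2 <= t)%nat.
Proof.
have := Cantor.to_nat_non_decreasing (Cantor.of_nat t).1 (Cantor.of_nat t).2.
by rewrite -surjective_pairing Cantor.cancel_to_of; lia.
Qed.

Lemma pairing_sum_le (v : nat -> nat -> R) (e : nat -> R) (eps : R) T :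
  (forall j k, 0 <= v j k) -> (forall j M, sum_f_R0 (v j) M <= e j) ->
  (forall M, sum_f_R0 e M <= eps) ->
  sum_f_R0 (fun t => v (Cantor.of_nat t).1 (Cantor.of_nat t).2) T <= eps.
Proof.
move=> v0 row_bound total_bound; rewrite sum_f_R0_big.
have bound1 (t : 'I_T.+1) : ((Cantor.of_nat t).1 < T.+1)%nat.
  by have := of_nat_le t; have := ltn_ord t; lia.
have bound2 (t : 'I_T.+1) : ((Cantor.of_nat t).2 < T.+1)%nat.
  by have := of_nat_le t; have := ltn_ord t; lia.
pose u (t : 'I_T.+1) : 'I_T.+1 * 'I_T.+1 := (Ordinal (bound1 t), Ordinal (bound2 t)).
have u_inj : {in 'I_T.+1 &, injective u}.
  move=> t t' _ _ [E1 E2]; apply: val_inj.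
  by rewrite -[val t]Cantor.cancel_to_of -[val t']Cantor.cancel_to_of
             [Cantor.of_nat t]surjective_pairing E1 E2 -surjective_pairing.
pose F (p : 'I_T.+1 * 'I_T.+1) := v p.1 p.2.
rewrite (eq_bigr (F \o u)) // -(big_imset _ u_inj) /=.
apply: Rle_trans (rsum_subset _ (fun p => v0 _ _)) _.
rewrite -(pair_bigA _ (fun j k : 'I_T.+1 => v j k)).
apply: Rle_trans (total_bound T); rewrite sum_f_R0_big.
by apply: rsum_le => j _; rewrite -sum_f_R0_big.
Qed.

Lemma geom_sum eps K : sum_f_R0 (fun j => eps / 2 ^ j.+1) K = eps - eps / 2 ^ K.+1.
Proof.
elim: K => [|K IH] /=; first by field.
by rewrite IH /=; field; apply: pow_nonzero; lra.
Qed.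

Section NullSets.
Variable n : nat.
Implicit Types (N X Y : Rn n -> Prop).

Lemma box_vol_ge0 (a b : Rn n) : (forall i, a i <= b i) -> 0 <= box_vol a b.
Proof.
move=> ab; apply: big_ind => [|x y|i _]; first lra.
- exact: Rmult_le_pos.
- by have := ab i; lra.
Qed.

Lemma null_sub X Y : (forall x, X x -> Y x) -> lebesgue_null Y -> lebesgue_null X.
Proof.
move=> XY nullY eps eps0; have [a [b [ab [cover vol]]]] := nullY eps eps0.
by exists a, b; split=> //; split=> // x /XY /cover.
Qed.

(* Countable unions of null sets are null: cover the j-th set with total
   volume eps 2^-(j+1) and enumerate all boxes along the Cantor pairing. *)
Lemma null_union (M : nat -> Rn n -> Prop) :
  (forall j, lebesgue_null (M j)) -> lebesgue_null (fun x => exists j, M j x).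
Proof.
move=> nullM eps eps0.
have eps_j j : 0 < eps / 2 ^ j.+1 by apply: Rdiv_lt_0_compat => //; apply: pow_lt; lra.
pose cover j (a b : nat -> Rn n) := (forall k i, a k i <= b k i) /\
  (forall x, M j x -> exists k, forall i, a k i <= x i <= b k i) /\
  (forall m, sum_f_R0 (fun k => box_vol (a k) (b k)) m <= eps / 2 ^ j.+1).
have [ab covers_ab] : exists ab : nat -> (nat -> Rn n) * (nat -> Rn n),
    forall j, cover j (ab j).1 (ab j).2.
  apply: (@choice _ _ (fun j p => cover j p.1 p.2)) => j.
  by have [a [b cov]] := nullM j _ (eps_j j); exists (a, b).
exists (fun t => (ab (Cantor.of_nat t).1).1 (Cantor.of_nat t).2),
       (fun t => (ab (Cantor.of_nat t).1).2 (Cantor.of_nat t).2).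
split; [|split].
- by move=> t i; have [le _] := covers_ab (Cantor.of_nat t).1.
- move=> x [j Mjx]; have [_ [covered _]] := covers_ab j; have [k box_k] := covered x Mjx.
  by exists (Cantor.to_nat (j, k)); rewrite Cantor.cancel_of_to.
- move=> m; apply: (pairing_sum_le (v := fun j k => box_vol ((ab j).1 k) ((ab j).2 k))
                         (e := fun j => eps / 2 ^ j.+1)).
  + by move=> j k; apply: box_vol_ge0; have [le _] := covers_ab j.
  + by move=> j M'; have [_ [_ vol]] := covers_ab j.
  + by move=> M'; rewrite geom_sum; have := eps_j M'; lra.
Qed.

Hypothesis n_pos : (0 < n)%nat.

Lemma box_vol_point (a : Rn n) : box_vol a a = 0.
Proof.
case: n n_pos a => [//|k] _ a.
by rewrite /box_vol big_ord_recr /= Rminus_diag Rmult_0_r.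
Qed.

Lemma null_empty : lebesgue_null (fun _ : Rn n => False).
Proof.
move=> eps eps0; exists (fun _ _ => 0), (fun _ _ => 0).
split=> [k i|]; first lra.
split=> [x []|m]; rewrite box_vol_point sum_cte; lra.
Qed.

Lemma null_guard (P : Prop) X : (P -> lebesgue_null X) -> lebesgue_null (fun x => P /\ X x).
Proof.
move=> PX; case: (classic P) => [/PX nullX|notP].
- by apply: null_sub nullX => x [].
- by apply: null_sub null_empty => x [].
Qed.
End NullSets.


(* The triangle wave: distance from t to the nearest even integer 2 * nearest2 t. *)
Definition nearest2 (t : R) : Z := (up (t / 2 + / 2) - 1)%Z.
Definition wave (t : R) : R := Rabs (t - 2 * IZR (nearest2 t)).

Lemma nearest2_spec t : IZR (nearest2 t) <= t / 2 + / 2 < IZR (nearest2 t) + 1.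
Proof. by rewrite /nearest2 minus_IZR; have [] := archimed (t / 2 + / 2); lra. Qed.

Lemma wave_range t : 0 <= wave t <= 1.
Proof.
have := nearest2_spec t; rewrite /wave; move: (IZR _) => u bounds.
by split; [apply: Rabs_pos | apply: Rabs_le; lra].
Qed.

Lemma wave_min t (m : Z) : wave t <= Rabs (t - 2 * IZR m).
Proof.
have := nearest2_spec t; rewrite /wave.
case: (Z.lt_total m (nearest2 t)) => [m_lt|[->|m_gt]] bounds.
- have : IZR m <= IZR (nearest2 t) - 1 by rewrite -minus_IZR; apply: IZR_le; lia.
  move: (IZR (nearest2 t)) (IZR m) bounds => u v bounds vu.
  by rewrite (Rabs_right (t - 2 * v)); [apply: Rabs_le | ]; lra.
- lra.
- have : IZR (nearest2 t) + 1 <= IZR m by rewrite -plus_IZR; apply: IZR_le; lia.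
  move: (IZR (nearest2 t)) (IZR m) bounds => u v bounds uv.
  by rewrite (Rabs_left (t - 2 * v)); [apply: Rabs_le | ]; lra.
Qed.

(* The wave is 1-Lipschitz, being a distance function. *)
Lemma wave_lip s t : Rabs (wave s - wave t) <= Rabs (s - t).
Proof.
have tri a b : wave a <= Rabs (a - b) + wave b.
  apply: Rle_trans (wave_min a (nearest2 b)) _; rewrite /wave.
  have -> : a - 2 * IZR (nearest2 b) = (a - b) + (b - 2 * IZR (nearest2 b)) by ring.
  exact: Rabs_triang.
have := tri s t; have := tri t s; rewrite Rabs_minus_sym => ? ?.
by apply: Rabs_le; lra.
Qed.

Lemma wave_cases t : t = 2 * IZR (nearest2 t) + wave t \/ t = 2 * IZR (nearest2 t) - wave t.
Proof.
rewrite /wave; case: (Rle_dec 0 (t - 2 * IZR (nearest2 t))) => sign.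
- by left; rewrite Rabs_right; lra.
- by right; rewrite Rabs_left; lra.
Qed.

Section Folding.
Variable n : nat.

Definition fold_cube (x : Rn n) : Rn n := fun i => wave (x i).

Definition cube (x : Rn n) : Prop := forall i, 0 <= x i <= 1.

Lemma fold_cube_in (x : Rn n) : cube (fold_cube x).
Proof. by move=> i; apply: wave_range. Qed.

Lemma fold_cube_lip (x y : Rn n) : edist (fold_cube x) (fold_cube y) <= edist x y.
Proof.
apply: sqrt_le_1_alt; apply: rsum_le => i _.
by have := Rsqr_le_abs_1 _ _ (wave_lip (x i) (y i)); rewrite /Rsqr.
Qed.

(* The branches of the folding: coordinatewise an even translation composed
   with a possible reflection, described by (a, b, keep) for 2(a - b) +/- t. *)
Definition unfold (w : {ffun 'I_n -> nat * nat * bool}) (y : Rn n) : Rn n :=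
  fun i => 2 * (INR (w i).1.1 - INR (w i).1.2) + (if (w i).2 then y i else - y i).

(* Unfolding is an isometry preserving volumes of boxes; it maps null sets to
   null sets. *)
Lemma null_unfold w N : lebesgue_null N -> lebesgue_null (fun x => exists y, N y /\ x = unfold w y).
Proof.
move=> nullN eps eps0; have [a [b [ab [cover vol]]]] := nullN eps eps0.
pose shift i := 2 * (INR (w i).1.1 - INR (w i).1.2).
exists (fun k i => shift i + (if (w i).2 then a k i else - b k i)),
       (fun k i => shift i + (if (w i).2 then b k i else - a k i)).
split; [|split].
- by move=> k i /=; have := ab k i; case: (w i).2; lra.
- move=> x [y [Ny ->]]; have [k box_k] := cover y Ny; exists k => i.
  by have := box_k i; rewrite /unfold /shift; case: (w i).2; lra.
- move=> m; apply: Rle_trans (vol m); right; apply: PartSum.sum_eq => k _.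
  by apply: eq_bigr => i _; case: (w i).2; ring.
Qed.

Lemma fold_cube_branch (x : Rn n) : exists w, x = unfold w (fold_cube x).
Proof.
have branch i : exists p : nat * nat * bool,
    x i = 2 * (INR p.1.1 - INR p.1.2) + (if p.2 then wave (x i) else - wave (x i)).
  have [a [b ab]] := IZR_nat_diff (nearest2 (x i)).
  by case: (wave_cases (x i)) => E; [exists (a, b, true) | exists (a, b, false)];
    rewrite /= -ab; lra.
have [w w_spec] := choice _ branch.
exists [ffun i => w i]; apply: functional_extensionality => i.
by rewrite /unfold ffunE; apply: w_spec.
Qed.

(* Preimages of null sets under the folding are null: the preimage is covered
   by countably many unfolded copies. *)
Lemma null_fold_preimage N : lebesgue_null N -> lebesgue_null (fun x => N (fold_cube x)).
Proof.
move=> nullN.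
pose M j x := if @unpickle {ffun 'I_n -> nat * nat * bool} j is Some w
              then exists y, N y /\ x = unfold w y else False.
apply: (null_sub (Y := fun x => exists j, M j x)); last first.
  apply: null_union => j; rewrite /M; case: unpickle => [w|]; first exact: null_unfold.
  by apply: null_sub nullN.
move=> x Nx; have [w xw] := fold_cube_branch x.
by exists (pickle w); rewrite /M pickleK; exists (fold_cube x).
Qed.
End Folding.

Section CodedNull.
Variable n : nat.
Hypothesis n_pos : (0 < n)%nat.

Lemma coded_closed_null_null (c : nat -> bool) : lebesgue_null (coded_closed_null (n := n) c).
Proof. exact: null_guard. Qed.

Lemma coded_null_null (c : nat -> bool) : lebesgue_null (coded_null (n := n) c).
Proof. exact: null_guard. Qed.

(* Every null set lies inside a coded null set: code the covers of total
   volume 1/(m+1), m in nat, and intersect their unions. *)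
Lemma null_in_coded_null (N : Rn n -> Prop) : lebesgue_null N ->
  exists c, forall x, N x -> coded_null c x.
Proof.
move=> nullN.
pose cover m (lo hi : nat -> Rn n) := (forall k i, lo k i <= hi k i) /\
  (forall x, N x -> exists k, in_box (lo k) (hi k) x) /\
  (forall M, sum_f_R0 (fun k => box_vol (lo k) (hi k)) M <= / INR m.+1).
have [ab covers] : exists ab : nat -> (nat -> Rn n) * (nat -> Rn n),
    forall m, cover m (ab m).1 (ab m).2.
  apply: (@choice _ _ (fun m p => cover m p.1 p.2)) => m.
  have m_pos : 0 < / INR m.+1 by apply: Rinv_0_lt_compat; apply: lt_0_INR; lia.
  by have [lo [hi cov]] := nullN _ m_pos; exists (lo, hi).
have [c [lo_c [hi_c _]]] := box_data_surj (fun m => (ab m).1) (fun m => (ab m).2) (fun _ => 0%nat).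
have cover_c x : N x -> cover_shape (decode_reals c) x.
  move=> Nx m; have [_ [covered _]] := covers m; have [k box_k] := covered x Nx.
  by exists k; rewrite lo_c hi_c.
exists c => x Nx; split; last exact: cover_c.
move=> eps eps0; have [m [m_large m_pos]] := archimed_cor1 eps eps0.
case: m m_large m_pos => [|m] m_large m_pos; first lia.
have [le [_ vol]] := covers m.
exists (ab m).1, (ab m).2; split=> //; split=> [y shape_y|M].
- by have [k] := shape_y m; exists k; rewrite -lo_c -hi_c.
- by apply: Rle_trans (vol M) _; lra.
Qed.
End CodedNull.

(* Hypothesis (star) for families indexed by a small set of reals, with the
   point chosen in the unit cube: fold everything onto the cube. *)
Lemma star_in_cube n (hs : hyp_star n) (J : R -> Prop) (G : R -> Rn n -> Prop) (N : Rn n -> Prop) :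
  small J -> (forall b, J b -> is_closed (G b) /\ lebesgue_null (G b)) -> lebesgue_null N ->
  exists x, cube x /\ ~ N x /\ forall b, J b -> ~ G b x.
Proof.
move=> smallJ closed_null nullN.
pose F (Y : Rn n -> Prop) := exists b, J b /\ Y = (fun x => G b (fold_cube x)).
have F_closed_null Y : F Y -> is_closed Y /\ lebesgue_null Y.
  move=> [b [Jb ->]]; have [closedG nullG] := closed_null b Jb; split.
  - by apply: closed_preimage closedG; apply: fold_cube_lip.
  - exact: null_fold_preimage.
pose label (s : {Y | F Y}) : R := proj1_sig (constructive_indefinite_description _ (proj2_sig s)).
have label_spec s : J (label s) /\ proj1_sig s = (fun x => G (label s) (fold_cube x)).
  by rewrite /label; case: constructive_indefinite_description.
have label_inj : injective label.
  move=> u v E; have [_ Eu] := label_spec u; have [_ Ev] := label_spec v.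
  by apply: eq_sig_hprop => [? ? ?|]; [apply: proof_irrelevance | rewrite Eu Ev E].
have F_card : card_lt_continuum F.
  split; first by exists label.
  move=> [h h_inj]; apply: smallJ; exists (label \o h); split.
  - by move=> r s /label_inj /h_inj.
  - by move=> r; have [] := label_spec (h r).
have [x [notN notF]] := hs F F_closed_null F_card _ (null_fold_preimage nullN).
exists (fold_cube x); split; first exact: fold_cube_in.
split=> // b Jb Gbx; apply: notF; exists (fun x => G b (fold_cube x)).
by split=> //; exists b.
Qed.

Lemma coded_ordering : exists (I : R -> Prop) (lt : R -> R -> Prop) (code : R -> nat -> bool),
  (forall a, I a -> small (fun b => lt b a)) /\
  (forall b, I b -> small (fun a => ~ lt b a)) /\
  (forall c, exists a, I a /\ code a = c).
Proof.
have [I [lt [bigI [small_below small_above]]]] := continuum_ordering.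
have [idx [idx_inj idx_I]] : exists h : R -> R, injective h /\ forall r, I (h r) by apply: NNPP.
have enum_codes a : exists c : nat -> bool, forall c', idx (ternary c') = a -> c' = c.
  case: (classic (exists c, idx (ternary c) = a)) => [[c E]|none].
  - by exists c => c' E'; apply: ternary_inj; apply: idx_inj; rewrite E E'.
  - by exists (fun _ => false) => c' E'; exfalso; apply: none; exists c'.
have [code code_spec] := choice _ enum_codes.
exists I, lt, code; split=> //; split=> // c.
by exists (idx (ternary c)); split=> //; rewrite -(code_spec _ c).
Qed.

Section LuzinSet.
Variable n : nat.
Hypothesis n_pos : (0 < n)%nat.
Hypothesis star : hyp_star n.

Theorem luzin_set : exists A : Rn n -> Prop,
  (forall x, A x -> cube x) /\ ~ lebesgue_null A /\
  forall (c : nat -> bool) (h : R -> Rn n), injective h ->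
    (forall r, A (h r)) -> (forall r, coded_closed_null c (h r)) -> False.
Proof.
have [I [lt [code [small_below [small_above code_onto]]]]] := coded_ordering.
have stage a : exists x, cube x /\ ~ coded_null (n := n) (code a) x /\
    forall b, I a -> I b -> lt b a -> ~ coded_closed_null (code b) x.
  have J_small : small (fun b => I a /\ I b /\ lt b a).
    case: (classic (I a)) => [Ia|notIa].
    - by apply: (small_sub _ (small_below a Ia)) => b [_ []].
    - by move=> [h [_ /(_ 0) [/notIa]]].
  have closed_null b : is_closed (coded_closed_null (n := n) (code b)) /\
                       lebesgue_null (coded_closed_null (n := n) (code b)).
    by split; [apply: coded_closed_null_closed | apply: coded_closed_null_null].
  have [x [cube_x [notN avoid]]] := star_in_cube star J_small (fun b _ => closed_null b)
    (coded_null_null n_pos (code a)).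
  by exists x; split=> //; split=> // b Ia Ib ba; apply: avoid.
have [X X_spec] := choice _ stage.
exists (fun x => exists a, I a /\ x = X a); split; [|split].
- by move=> x [a [_ ->]]; have [] := X_spec a.
- move=> /null_in_coded_null [//|c coverA].
  have [a [Ia code_a]] := code_onto c; subst c; have [_ [notN _]] := X_spec a.
  by apply: notN; apply: coverA; exists a.
- move=> c h h_inj h_A h_C; have [b [Ib codeb]] := code_onto c.
  have [stage_of stage_spec] := choice _ h_A.
  apply: (small_above b Ib); exists stage_of; split.
  + move=> r s E; apply: h_inj.
    by have [_ ->] := stage_spec r; have [_ ->] := stage_spec s; rewrite E.
  + move=> r lt_b; have [Ir Er] := stage_spec r; have [_ [_ avoid]] := X_spec (stage_of r).
    by apply: (avoid b Ir Ib lt_b); rewrite -Er codeb.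
Qed.
End LuzinSet.

Lemma sum_card_disjoint (T : finType) (N : nat) (G : 'I_N -> {set T}) :
  (forall t t' x, x \in G t -> x \in G t' -> t = t') -> (\sum_(t < N) #|G t| <= #|T|)%nat.
Proof.
move=> disj; have indicator (A : {set T}) : #|A| = (\sum_(x : T) (x \in A : nat))%nat.
  by rewrite -sum1_card big_mkcond /=; apply: eq_bigr => x _; case: (x \in A).
under eq_bigr => t _ do rewrite indicator.
rewrite exchange_big /= -[X in (_ <= X)%nat]sum1_card; apply: leq_sum => x _.
have -> : (\sum_(t < N) (x \in G t : nat) = #|[pred t | x \in G t]|)%nat.
  rewrite -sum1_card [in RHS]big_mkcond /=; apply: eq_bigr => t _.
  by rewrite inE; case: (x \in G t).
by apply/card_le1_eqP => t t'; rewrite !inE => xt xt'; apply: disj xt' xt.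
Qed.

Lemma two_sparse (T : finType) (N : nat) (G : 'I_N -> {set T}) :
  (2 <= N)%nat -> (forall t t' x, x \in G t -> x \in G t' -> t = t') ->
  exists t0 t1 : 'I_N, (t0 < t1)%nat /\
    (#|G t0| * N <= 2 * #|T|)%nat /\ (#|G t1| * N <= 2 * #|T|)%nat.
Proof.
move=> N2 disj; pose dense := [set t | (2 * #|T| < #|G t| * N)%nat].
have sparse2 : (1 < #|~: dense|)%nat.
  rewrite ltnNge; apply/negP => few.
  have many : (N - 1 <= #|dense|)%nat by have := cardsC dense; rewrite card_ord; lia.
  have dense_sum : (\sum_(t in dense) (2 * #|T|).+1 <= (\sum_(t < N) #|G t|) * N)%nat.
    rewrite big_distrl big_mkcond /=; apply: leq_sum => t _.
    by rewrite inE; case: ifP.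
  rewrite sum_nat_const in dense_sum.
  have := leq_mul many (leqnn (2 * #|T|).+1).
  have := leq_mul (sum_card_disjoint disj) (leqnn N).
  move: dense_sum N2; move: (#|T|) (#|dense|) (\sum_(t < N) #|G t|)%nat => a d s; nia.
have [t [t' [+ + tt']]] := card_gt1P sparse2; rewrite !inE -!leqNgt => t_sp t'_sp.
case: (ltngtP t t') => [lt|gt|/val_inj eq]; [by exists t, t' | by exists t', t |].
by move/eqP: tt'.
Qed.

Section BoxLists.
Variable n : nat.

Definition box_list := seq (Rn n * Rn n).
Definition no_box : Rn n * Rn n := (fun _ => 0, fun _ => 0).
Definition listvol (B : box_list) : R := \big[Rplus/0]_(p <- B) box_vol p.1 p.2.
Definition proper (B : box_list) : Prop := forall p, List.In p B -> forall i, p.1 i <= p.2 i.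

(* nth boxes of a proper list are proper (the default box is degenerate). *)
Lemma proper_nth (B : box_list) k i : proper B -> (nth no_box B k).1 i <= (nth no_box B k).2 i.
Proof.
elim: B k => [|p B IH] [|k] properB /=; rewrite ?nth_nil /=; try lra.
- by apply: properB; left.
- by apply: IH => q Bq; apply: properB; right.
Qed.

Lemma In_nth (B : box_list) p : List.In p B -> exists k, (k < size B)%nat /\ nth no_box B k = p.
Proof.
elim: B => [|q B IH] //= [->|/IH [k [kB <-]]]; first by exists 0%nat.
by exists k.+1.
Qed.

Lemma listvol_ge0 (B : box_list) : proper B -> 0 <= listvol B.
Proof.
elim: B => [|p B IH] properB; rewrite /listvol ?big_nil ?big_cons /=; first lra.
have := box_vol_ge0 (properB p (or_introl erefl)).
by have := IH (fun q Bq => properB q (or_intror Bq)); rewrite /listvol; lra.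
Qed.
End BoxLists.
Arguments no_box {n}.

Section ProperLists.
Variable n : nat.
Hypothesis n_pos : (0 < n)%nat.

Lemma sum_nth_le_listvol (B : box_list n) M : proper B ->
  sum_f_R0 (fun k => box_vol (nth no_box B k).1 (nth no_box B k).2) M <= listvol B.
Proof.
elim: B M => [|p B IH] M properB.
- rewrite /listvol big_nil (PartSum.sum_eq _ (fun _ => 0)) ?sum_cte; first lra.
  by move=> k _; rewrite nth_nil box_vol_point.
- have properB' : proper B by move=> q Bq; apply: properB; right.
  have p_vol := box_vol_ge0 (properB p (or_introl erefl)).
  rewrite /listvol big_cons -/(listvol B); case: M => [|M].
  + by have := listvol_ge0 properB'; rewrite /=; lra.
  + rewrite decomp_sum; last lia.
    by have := IH M properB'; rewrite /=; lra.
Qed.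
End ProperLists.

Section Flatten.
Variables (n : nat) (X : Type) (F : X -> box_list n).

Lemma In_flatten (l : seq X) s p :
  List.In s l -> List.In p (F s) -> List.In p (flatten [seq F s | s <- l]).
Proof.
elim: l => [|s' l IH] //= [->|ls] Fp; apply: List.in_or_app; [left|right] => //.
exact: IH.
Qed.

Lemma proper_flatten (l : seq X) :
  (forall s, List.In s l -> proper (F s)) -> proper (flatten [seq F s | s <- l]).
Proof.
elim: l => [|s l IH] properF p //= in_app.
case: (List.in_app_or _ _ _ in_app) => [Fp|lp].
- by apply: (properF s) => //; left.
- by apply: IH lp => s' ls'; apply: properF; right.
Qed.

Lemma listvol_flatten (l : seq X) :
  listvol (flatten [seq F s | s <- l]) = \big[Rplus/0]_(s <- l) listvol (F s).
Proof. by elim: l => [|s l IH]; rewrite /listvol ?big_nil // big_cons -IH big_cat. Qed.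
End Flatten.

Lemma INR_expn a k : INR (expn a k) = INR a ^ k.
Proof. by elim: k => [|k IH]; rewrite ?expn0 // expnS mult_INR IH. Qed.

Lemma iter_Rmult k c : iter k (Rmult c) 1 = c ^ k.
Proof. by elim: k => [|k IH] //=; rewrite IH. Qed.

Lemma unit_grid_index (L : nat) t : (0 < L)%nat -> 0 <= t <= INR L ->
  exists k : 'I_L, INR k <= t <= INR k + 1.
Proof.
elim: L t => [//|L IH] t _ t_range.
case: (Rle_dec t (INR L)) => [t_le|t_gt]; last by exists ord_max; rewrite /= -S_INR; lra.
case: L IH t_range t_le => [|L] IH t_range t_le; first by exists ord0; rewrite /= in t_range *; lra.
have [k k_spec] := IH t isT (conj (proj1 t_range) t_le).
by exists (widen_ord (leqnSn _) k).
Qed.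

Section Grid.
Variables (n L : nat).
Hypothesis L_pos : (0 < L)%nat.

Let L_pos_R : 0 < INR L.
Proof. by apply: lt_0_INR; lia. Qed.

Definition cell (z : {ffun 'I_n -> 'I_L}) : Rn n * Rn n :=
  (fun i => INR (z i) / INR L, fun i => INR (z i).+1 / INR L).

Lemma cell_proper z i : (cell z).1 i <= (cell z).2 i.
Proof.
rewrite /cell; cbn [fst snd]; rewrite S_INR; apply: Rmult_le_compat_r; last lra.
by apply: Rlt_le; apply: Rinv_0_lt_compat.
Qed.

Lemma cell_vol z : box_vol (cell z).1 (cell z).2 = (/ INR L) ^ n.
Proof.
rewrite /box_vol /cell; cbn [fst snd].
rewrite (eq_bigr (fun _ => / INR L)) ?big_const_ord ?iter_Rmult //.
by move=> i _; rewrite S_INR; field; lra.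
Qed.

Lemma grid_index t : 0 <= t <= 1 -> exists k : 'I_L, INR k / INR L <= t <= INR k.+1 / INR L.
Proof.
move=> t01; suff [k [lo hi]] : exists k : 'I_L, INR k <= t * INR L <= INR k + 1.
  exists k; rewrite S_INR; split; apply: (Rmult_le_reg_r (INR L)) => //;
  by rewrite /Rdiv Rmult_assoc Rinv_l; lra.
by apply: unit_grid_index => //; nra.
Qed.

Lemma cell_cover x : cube x -> exists z, in_box (cell z).1 (cell z).2 x.
Proof.
move=> cube_x; have [z z_spec] := choice _ (fun i => grid_index (cube_x i)).
by exists [ffun i => z i] => i; rewrite /cell; cbn [fst snd]; rewrite ffunE; apply: z_spec.
Qed.

Lemma cell_diam z x y : in_box (cell z).1 (cell z).2 x -> in_box (cell z).1 (cell z).2 y ->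
  edist x y <= INR n * / INR L.
Proof.
move=> in_x in_y; apply: edist_le_coord; first by apply: Rlt_le; apply: Rinv_0_lt_compat.
move=> i; have := in_x i; have := in_y i; rewrite /cell; cbn [fst snd]; rewrite S_INR => ? ?.
have -> : / INR L = (INR (z i) + 1) / INR L - INR (z i) / INR L by field; lra.
by apply: Rabs_le; lra.
Qed.

Lemma listvol_cells (G : {set {ffun 'I_n -> 'I_L}}) (N : nat) : (0 < N)%nat ->
  (#|G| * N <= 2 * #|{ffun 'I_n -> 'I_L}|)%nat ->
  listvol [seq cell z | z <- enum G] <= 2 / INR N.
Proof.
move=> N_pos sparse; have N_pos' : 0 < INR N by apply: lt_0_INR; lia.
rewrite /listvol big_map (eq_bigr (fun _ => (/ INR L) ^ n)) => [|z _]; last exact: cell_vol.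
rewrite rsum_const -cardE pow_inv.
move: sparse; rewrite card_ffun !card_ord => /leP /le_INR; rewrite !mult_INR INR_expn.
have Ln_pos : 0 < INR L ^ n by apply: pow_lt.
move: (INR #|G|) (INR L ^ n) Ln_pos => g P P_pos /= sparse.
apply: (Rmult_le_reg_r (P * INR N)); first nra.
by rewrite /Rdiv; field_simplify; [lra | lra | lra].
Qed.
End Grid.

Section Splitting.
Variables (n : nat) (S : Rn n -> Prop) (f : Rn n -> R).
Hypothesis n_pos : (0 < n)%nat.
Hypothesis S_cube : forall x, S x -> cube x.
Hypothesis f_uc : unif_cont_on S f.

Definition covers (B : box_list n) (lo hi : R) : Prop :=
  forall x, S x -> lo <= f x <= hi -> exists p, List.In p B /\ in_box p.1 p.2 x.

Definition thin_cover (N : nat) (lo hi : R) (B : box_list n) : Prop :=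
  covers B lo hi /\ proper B /\ listvol B <= 2 / INR N.

Definition hit_cells (L : nat) (lo hi : R) : {set {ffun 'I_n -> 'I_L}} :=
  [set z | `[< exists x, S x /\ lo <= f x <= hi /\ in_box (cell z).1 (cell z).2 x >]].

Lemma hit_cells_cover L lo hi : (0 < L)%nat ->
  covers [seq cell z | z <- enum (hit_cells L lo hi)] lo hi.
Proof.
move=> L_pos x Sx fx; have [z z_x] := cell_cover L_pos (S_cube Sx).
exists (cell z); split=> //; apply: List.in_map.
have : z \in enum (hit_cells L lo hi) by rewrite mem_enum inE; apply/asboolP; exists x.
by elim: (enum _) => [|z' s IH] //=; rewrite inE => /orP [/eqP ->|/IH]; [left|right].
Qed.

Lemma cells_proper L (l : seq {ffun 'I_n -> 'I_L}) : (0 < L)%nat -> proper [seq cell z | z <- l].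
Proof. by move=> L_pos p; elim: l => [[]|z l IH [<-|/IH //]]; apply: cell_proper. Qed.

Lemma hit_cells_separated L h del lo hi lo' hi' z : (0 < L)%nat ->
  INR n * / INR L < del ->
  (forall x y, S x -> S y -> edist x y < del -> Rabs (f x - f y) < h) ->
  hi + h <= lo' -> z \in hit_cells L lo hi -> z \notin hit_cells L lo' hi'.
Proof.
move=> L_pos mesh f_close gap; rewrite !inE => /asboolP [x [Sx [fx zx]]].
apply/negP => /asboolP [y [Sy [fy zy]]].
have := f_close x y Sx Sy (Rle_lt_trans _ _ _ (cell_diam L_pos zx zy) mesh).
by have := Rle_abs (- (f x - f y)); rewrite Rabs_Ropp; lra.
Qed.

(* One step of the Cantor scheme: inside any [u, v] there are two separated
   subintervals whose preimages are covered by boxes of volume <= 2/N. *)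
Lemma split_step (N : nat) u v : (2 <= N)%nat -> u < v ->
  exists u0 v0 u1 v1 B0 B1, u <= u0 /\ u0 < v0 /\ v0 < u1 /\ u1 < v1 /\ v1 <= v /\
    thin_cover N u0 v0 B0 /\ thin_cover N u1 v1 B1.
Proof.
move=> N2 uv; have N2' : 2 <= INR N by have := le_INR _ _ (elimT leP N2).
pose h := (v - u) / (2 * INR N - 1).
have h_pos : 0 < h by apply: Rdiv_lt_0_compat; lra.
have [del [del_pos f_close]] := f_uc h_pos.
have n_pos' : 0 < INR n by apply: lt_0_INR; lia.
have [L [L_large /ltP L_pos]] := archimed_cor1 (del / INR n) (Rdiv_lt_0_compat _ _ del_pos n_pos').
have mesh : INR n * / INR L < del.
  have := Rmult_lt_compat_l _ _ _ n_pos' L_large.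
  by have -> : INR n * (del / INR n) = del by field; lra.
pose lo (t : nat) := u + 2 * INR t * h.
pose hi (t : nat) := lo t + h.
have gap (t t' : nat) : (t < t')%nat -> hi t + h <= lo t'.
  move=> /leP /le_INR; rewrite S_INR /hi /lo; nra.
pose G (t : 'I_N) := hit_cells L (lo t) (hi t).
have disj t t' z : z \in G t -> z \in G t' -> t = t'.
  move=> zt zt'; case: (ltngtP t t') => [tt'|t't|/val_inj //].
  - by have := hit_cells_separated (hi t') L_pos mesh f_close (gap _ _ tt') zt; rewrite zt'.
  - by have := hit_cells_separated (hi t) L_pos mesh f_close (gap _ _ t't) zt'; rewrite zt.
have [t0 [t1 [t01 [sparse0 sparse1]]]] := two_sparse N2 disj.
have thin (t : 'I_N) : (#|G t| * N <= 2 * #|{ffun 'I_n -> 'I_L}|)%nat ->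
    thin_cover N (lo t) (hi t) [seq cell z | z <- enum (G t)].
  move=> sparse; split; [exact: hit_cells_cover | split; first exact: cells_proper].
  by apply: listvol_cells => //; lia.
exists (lo t0), (hi t0), (lo t1), (hi t1), [seq cell z | z <- enum (G t0)], [seq cell z | z <- enum (G t1)].
have t0_pos := pos_INR t0.
have t1_last : INR t1 + 1 <= INR N by rewrite -S_INR; apply: le_INR; apply/leP.
have v_def : u + (2 * INR N - 1) * h = v by rewrite /h; field; lra.
have := gap _ _ t01; rewrite /hi /lo.
by do 5 (split; first nra); split; apply: thin.
Qed.
End Splitting.

Fixpoint words (k : nat) : seq (seq bool) :=
  if k is k'.+1 then [seq false :: s | s <- words k'] ++ [seq true :: s | s <- words k']
  else [:: [::]].

Lemma size_words k : size (words k) = expn 2 k.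
Proof. by elim: k => [|k IH] //=; rewrite size_cat !size_map IH expnS mul2n addnn. Qed.

Lemma words_complete s : List.In s (words (size s)).
Proof.
elim: s => [|b s IH] /=; first by left.
by apply: List.in_or_app; case: b; [right|left]; apply: (List.in_map (cons _)).
Qed.

Lemma words_size k s : List.In s (words k) -> size s = k.
Proof.
elim: k s => [|k IH] s /=; first by case=> // <-.
move=> in_s; case: (List.in_app_or _ _ _ in_s) => in_half;
  by have [s' [<- /IH /= ->]] := (List.in_map_iff _ _ _).1 in_half.
Qed.

Section CantorScheme.
Variables (n : nat) (S : Rn n -> Prop) (f : Rn n -> R) (c d : R).
Hypothesis n_pos : (0 < n)%nat.
Hypothesis S_cube : forall x, S x -> cube x.
Hypothesis f_uc : unif_cont_on S f.
Hypothesis cd : c < d.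
Hypothesis f_onto : forall y, c <= y <= d -> exists x, S x /\ f x = y.

Record node := Node { nlo : R; nhi : R; nboxes : box_list n }.

Definition good_split (m : nat) (u v : R) (p : node * node) : Prop :=
  u <= nlo p.1 /\ nlo p.1 < nhi p.1 /\ nhi p.1 < nlo p.2 /\ nlo p.2 < nhi p.2 /\ nhi p.2 <= v /\
  thin_cover S f (expn 4 m.+1) (nlo p.1) (nhi p.1) (nboxes p.1) /\
  thin_cover S f (expn 4 m.+1) (nlo p.2) (nhi p.2) (nboxes p.2).

(* Good splits exist by split_step (the implication avoids a case analysis
   in the choice function below). *)
Lemma good_split_exists m u v : exists p, u < v -> good_split m u v p.
Proof.
case: (classic (u < v)) => [uv|vu]; last by exists (Node 0 0 [::], Node 0 0 [::]).
have pos4 : (0 < expn 4 m)%nat by rewrite expn_gt0.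
have N2 : (2 <= expn 4 m.+1)%nat by rewrite expnS; lia.
have [u0 [v0 [u1 [v1 [B0 [B1 good]]]]]] := split_step n_pos S_cube f_uc N2 uv.
by exists (Node u0 v0 B0, Node u1 v1 B1).
Qed.

Definition split_at (m : nat) (u v : R) : node * node :=
  proj1_sig (constructive_indefinite_description _ (good_split_exists m u v)).

Lemma split_atP m u v : u < v -> good_split m u v (split_at m u v).
Proof. by rewrite /split_at; case: constructive_indefinite_description. Qed.

(* The node indexed by a word, read from its last letter (the root) to its first. *)
Fixpoint tree (s : seq bool) : node :=
  if s is b :: s' then
    let p := split_at (size s') (nlo (tree s')) (nhi (tree s')) in if b then p.2 else p.1
  else Node c d [::].

Lemma tree_lt s : nlo (tree s) < nhi (tree s).
Proof. by elim: s => [|b s IH] //=; have := split_atP (size s) IH; case: b; rewrite /good_split; lra. Qed.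

Lemma tree_split s : good_split (size s) (nlo (tree s)) (nhi (tree s))
  (tree (false :: s), tree (true :: s)).
Proof. exact: (split_atP (size s) (tree_lt s)). Qed.

Lemma tree_nested s b : nlo (tree s) <= nlo (tree (b :: s)) /\ nhi (tree (b :: s)) <= nhi (tree s).
Proof. by have := tree_split s; rewrite /good_split /=; case: b; lra. Qed.

Lemma tree_separated s : nhi (tree (false :: s)) < nlo (tree (true :: s)).
Proof. by have := tree_split s; rewrite /good_split /=; lra. Qed.

Lemma tree_thin s b : thin_cover S f (expn 4 (size s).+1)
  (nlo (tree (b :: s))) (nhi (tree (b :: s))) (nboxes (tree (b :: s))).
Proof. by have := tree_split s; rewrite /good_split /=; case: b; tauto. Qed.

Definition level (m : nat) : box_list n := flatten [seq nboxes (tree s) | s <- words m.+1].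

(* Level m is proper and has volume at most 2^-m: there are 2^(m+1) nodes of
   depth m + 1, each of volume at most 2 / 4^(m+1). *)
Lemma level_proper m : proper (level m).
Proof.
apply: proper_flatten => s /words_size; case: s => [//|b s] _.
by have [_ []] := tree_thin s b.
Qed.

Lemma level_vol m : listvol (level m) <= / 2 ^ m.
Proof.
rewrite /level listvol_flatten /= big_cat /= !big_map.
have half b : \big[Rplus/0]_(s <- words m) listvol (nboxes (tree (b :: s))) <=
              INR (expn 2 m) * (2 / INR (expn 4 m.+1)).
  rewrite -size_words -rsum_const; apply: rsum_le_In => s /words_size size_s.
  by have [_ [_]] := tree_thin s b; rewrite size_s.
have bound : INR (expn 2 m) * (2 / INR (expn 4 m.+1)) = / 2 ^ m / 2.
  have four : INR 4 = 2 * 2 by rewrite /=; lra.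
  have two : INR 2 = 2 by rewrite /=; lra.
  rewrite !INR_expn four two Rpow_mult_distr /=; field; apply: pow_nonzero; lra.
by have := half false; have := half true; rewrite bound; lra.
Qed.

Definition scheme_set : Rn n -> Prop :=
  fun x => forall m, exists k, (k < size (level m))%nat /\
    in_box (nth no_box (level m) k).1 (nth no_box (level m) k).2 x.

(* The scheme set is null since it is covered by each level. *)
Lemma scheme_set_null : lebesgue_null scheme_set.
Proof.
move=> eps eps0; have [N [N_large N_pos]] := archimed_cor1 eps eps0.
exists (fun k => (nth no_box (level N) k).1), (fun k => (nth no_box (level N) k).2).
split; [|split].
- by move=> k i; exact: proper_nth (level_proper (m := N)).
- by move=> x /(_ N) [k [_ box_k]]; exists k.
- move=> M; have := sum_nth_le_listvol n_pos M (level_proper (m := N)).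
  have := level_vol N.
  have : / 2 ^ N <= / INR N.
    apply: Rinv_le_contravar; first exact: lt_0_INR.
    by elim: (N) => [|k IH]; rewrite ?S_INR /=; [lra | have := pow_R1_Rle 2 k ltac:(lra); lra].
  lra.
Qed.

Fixpoint branch (sg : nat -> bool) (k : nat) : seq bool :=
  if k is k'.+1 then sg k' :: branch sg k' else [::].

Lemma size_branch sg k : size (branch sg k) = k.
Proof. by elim: k => [|k IH] //=; rewrite IH. Qed.

Definition blo sg k := nlo (tree (branch sg k)).
Definition bhi sg k := nhi (tree (branch sg k)).

Lemma branch_nested sg j k : (j <= k)%nat -> blo sg j <= blo sg k /\ bhi sg k <= bhi sg j.
Proof.
move=> /subnKC <-; elim: (k - j)%nat => [|t IH]; rewrite ?addn0; first lra.
by rewrite addnS; have := tree_nested (branch sg (j + t)) (sg (j + t)%nat); rewrite /blo /bhi /= in IH *; lra.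
Qed.

Lemma branch_lo_hi sg j k : blo sg j <= bhi sg k.
Proof.
have [lo_j _] := branch_nested sg (leq_addr k j).
have [_ hi_k] := branch_nested sg (leq_addl j k).
by have := tree_lt (branch sg (j + k)); rewrite /blo /bhi in lo_j hi_k *; lra.
Qed.

Lemma branch_bounded sg : bound (fun r => exists k, r = blo sg k).
Proof. by exists (bhi sg 0) => r [k ->]; apply: branch_lo_hi. Qed.

Definition branch_value (sg : nat -> bool) : R :=
  proj1_sig (completeness _ (branch_bounded sg) (ex_intro _ (blo sg 0) (ex_intro _ 0%nat erefl))).

Lemma branch_value_spec sg k : blo sg k <= branch_value sg <= bhi sg k.
Proof.
rewrite /branch_value; case: completeness => y [ub lub] /=; split.
- by apply: ub; exists k.
- by apply: lub => r [j ->]; apply: branch_lo_hi.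
Qed.

(* Different branches separate at their first difference, so they have
   different values. *)
Lemma branch_value_inj : injective branch_value.
Proof.
move=> sg sg' E; apply: NNPP => /first_difference [k [prefix diff]].
have same : branch sg k = branch sg' k.
  by elim: k prefix {diff} => [|k IH] prefix //=; rewrite prefix ?IH // => j /ltnW /prefix.
have := branch_value_spec sg k.+1; have := branch_value_spec sg' k.+1.
rewrite /blo /bhi /= same E; have := tree_separated (branch sg' k).
by case: (sg k) (sg' k) diff => [] [] //= _; lra.
Qed.

Definition branch_point (sg : nat -> bool) : Rn n :=
  proj1_sig (constructive_indefinite_description _ (f_onto (y := branch_value sg) (conj
    (proj1 (branch_value_spec sg 0)) (proj2 (branch_value_spec sg 0))))).

Lemma branch_point_spec sg : S (branch_point sg) /\ f (branch_point sg) = branch_value sg.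
Proof. by rewrite /branch_point; case: constructive_indefinite_description. Qed.

(* Branch points lie in the scheme set: at depth m + 1 the branch point is in
   the preimage of the node interval, which is covered by the node's boxes. *)
Lemma branch_point_scheme sg : scheme_set (branch_point sg).
Proof.
move=> m; have [S_pt f_pt] := branch_point_spec sg.
have [covered _] := tree_thin (branch sg m) (sg m).
have in_node : nlo (tree (sg m :: branch sg m)) <= branch_value sg <=
               nhi (tree (sg m :: branch sg m)) := branch_value_spec sg m.+1.
have [p [in_p box_p]] := covered _ S_pt (ltac:(rewrite f_pt; lra)).
have in_level : List.In p (level m).
  apply: (In_flatten (F := fun s => nboxes (tree s)) _ in_p).
  by rewrite -[X in words X](size_branch sg m.+1); apply: words_complete.
by have [k [k_size nth_k]] := In_nth in_level; exists k; rewrite nth_k.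
Qed.

Theorem cantor_scheme : exists (code : nat -> bool) (h : R -> Rn n),
  injective h /\ (forall r, S (h r)) /\ (forall r, coded_closed_null code (h r)).
Proof.
have [code [lo_code [hi_code count_code]]] := box_data_surj
  (fun m k => (nth no_box (level m) k).1) (fun m k => (nth no_box (level m) k).2)
  (fun m => size (level m)).
have shape_scheme x : closed_shape (decode_reals code) x <-> scheme_set x.
  by split=> in_x m; have [k box_k] := in_x m; exists k;
    rewrite ?lo_code ?hi_code ?count_code in box_k *.
exists code, (fun r => branch_point (cut_code r)); split; [|split].
- move=> r s E; apply: cut_code_inj; apply: branch_value_inj.
  by have [_ <-] := branch_point_spec (cut_code r); have [_ <-] := branch_point_spec (cut_code s); rewrite E.
- by move=> r; have [] := branch_point_spec (cut_code r).
- move=> r; split; last by apply/shape_scheme; apply: branch_point_scheme.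
  by apply: (null_sub (Y := scheme_set)) scheme_set_null => x /shape_scheme.
Qed.
End CantorScheme.

(* Main theorem: the Luzin set A has the required property, since a subset S
   of A mapped uniformly continuously onto [c, d] would contain, by the
   Cantor scheme, an injective copy of R inside a coded closed null set. *)
Theorem corollary3p5 (n : nat) (hn : (0 < n)%N) (hstar : hyp_star n) :
  exists A : Rn n -> Prop,
    ~ lebesgue_null A /\
    forall (S : Rn n -> Prop), (forall x, S x -> A x) ->
      forall (f : Rn n -> R) (c d : R), (c < d)%R ->
        unif_cont_on S f -> ~ maps_onto_interval S f c d.
Proof.
have [A [A_cube [A_not_null A_thin]]] := luzin_set hn hstar.
exists A; split=> // S SA f c d cd f_uc [_ f_onto].
have S_cube x : S x -> cube x by move/SA/A_cube.
have [code [h [h_inj [h_S h_C]]]] := cantor_scheme hn S_cube f_uc cd f_onto.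
exact: A_thin h_inj (fun r => SA _ (h_S r)) h_C.
Qed.
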